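(* Let $f:\mathbb{R}^d\to\mathbb{R}$ be differentiable with $f^*:=\sup_{\theta} f(\theta)<\infty$. Assume (i) $f$ is $L$-smooth; (ii) $f$ satisfies the non-uniform Łojasiewicz condition with degree $\xi=0$, i.e. there is a function $C:\mathbb{R}^d\to(0,\infty)$ with $\|\nabla f(\theta)\|_2\ge C(\theta)\,|f^*-f(\theta)|$ for all $\theta$. Fix $h\in(0,1)$ and $\eta_{\max}>0$, and run $\theta_{t+1}=\theta_t+\eta_t\nabla f(\theta_t)$ for $t=1,2,\dots$, where $\eta_t$ is chosen by backtracking Armijo line-search, i.e. $\eta_t$ is the largest step-size in $(0,\eta_{\max}]$ satisfying $$f(\theta_t+\eta_t\nabla f(\theta_t))\ge f(\theta_t)+h\,\eta_t\,\|\nabla f(\theta_t)\|_2^2 .$$ Assume (iii) $\mu:=\inf_{t\ge 1}[C(\theta_t)]^2>0$. Then for every $T\ge 1$, $$f^*-f(\theta_{T+1})\le \max\Big\{\frac{L}{2h(1-h)},\ \frac{1}{h\,\eta_{\max}}\Big\}\frac{1}{\mu\, T}.$$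
   Context: $f$ is $L$-smooth means $|f(\theta)-f(\theta')-\langle\nabla f(\theta'),\theta-\theta'\rangle|\le \frac{L}{2}\|\theta-\theta'\|_2^2$ for all $\theta,\theta'$. (In the paper $f$ is the policy-gradient objective of a softmax policy, e.g. $f(\theta)=\langle\pi_\theta,r\rangle$ for bandits or $f(\theta)=V^{\pi_\theta}(\rho)$ for tabular MDPs, but the result is stated for an abstract $f$ with these properties.) *)

From HB Require Import structures.
From mathcomp Require Import all_boot all_order all_algebra.
From mathcomp Require Import all_classical all_reals all_analysis.
Set Implicit Arguments. Unset Strict Implicit. Unset Printing Implicit Defensive.
Import Order.TTheory GRing.Theory Num.Theory.
Import numFieldNormedType.Exports.
Local Open Scope ring_scope.

Definition dotv {R : realType} {d : nat} (u v : 'rV[R]_d) : R :=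
  \sum_(i < d) u ord0 i * v ord0 i.

Definition norm2 {R : realType} {d : nat} (v : 'rV[R]_d) : R :=
  Num.sqrt (dotv v v).

Definition is_gradient {R : realType} {d : nat}
  (f : 'rV[R]_d -> R) (g : 'rV[R]_d -> 'rV[R]_d) : Prop :=
  forall θ, differentiable f θ /\ forall v, 'd f θ v = dotv (g θ) v.

Definition L_smooth {R : realType} {d : nat}
  (f : 'rV[R]_d -> R) (g : 'rV[R]_d -> 'rV[R]_d) (L : R) : Prop :=
  forall θ θ', `|f θ - f θ' - dotv (g θ') (θ - θ')| <= L / 2 * norm2 (θ - θ') ^+ 2.

Definition is_sup_of {R : realType} {d : nat} (f : 'rV[R]_d -> R) (fstar : R) : Prop :=
  (forall θ, f θ <= fstar) /\ (forall e, 0 < e -> exists θ, fstar - e < f θ).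

Definition armijo {R : realType} {d : nat}
  (f : 'rV[R]_d -> R) (g : 'rV[R]_d -> 'rV[R]_d) (h : R) (θ : 'rV[R]_d) (η : R) : Prop :=
  f (θ + η *: g θ) >= f θ + h * η * norm2 (g θ) ^+ 2.

From HB Require Import structures.
From mathcomp Require Import all_boot all_order all_algebra.
From mathcomp Require Import all_classical all_reals all_analysis.
From mathcomp Require Import ring lra.
Import Order.TTheory GRing.Theory Num.Theory.
Import numFieldNormedType.Exports.
Local Open Scope ring_scope.

(* Let M be the maximum in the bound and delta_t := f* - f(theta_t).  By
   L-smoothness every step eta >= 0 with L eta <= 2(1 - h) passes the Armijo
   test, so backtracking always returns eta_t >= 1/(hM).  The Armijo condition
   then raises f by at least |grad f(theta_t)|^2 / M, and the Lojasiewicz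
   inequality turns this into delta_(t+1) <= delta_t - (mu/M) delta_t^2.  Such a
   recursion forces c n delta_(n+1) <= 1 with c = mu/M, i.e. the O(1/T) rate. *)

Lemma quadratic_decrease_step {R : realFieldType} (x y n : R) :
  0 <= n -> 0 <= y -> y <= x - x ^+ 2 -> x * n <= 1 -> y * (n + 1) <= 1.
Proof.
move=> n_ge0 y_ge0 yx xn.
have x_le1 : x <= 1 by nra.
have : y * (n + 1) <= (x - x ^+ 2) * (n + 1) by apply: ler_wpM2r; lra.
nra.
Qed.

Lemma quadratic_decrease_rate {R : realFieldType} {c : R} {u : nat -> R} :
  0 <= c -> (forall n, 0 <= u n) ->
  (forall n, (1 <= n)%N -> u n.+1 <= u n - c * u n ^+ 2) ->
  forall n, c * n%:R * u n.+1 <= 1.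
Proof.
move=> c_ge0 u_ge0 u_dec; elim=> [|n IH]; first by rewrite mulr0 mul0r ler01.
rewrite -natr1 mulrAC.
apply: (@quadratic_decrease_step _ (c * u n.+1)).
- exact: ler0n.
- by rewrite mulr_ge0.
- by rewrite exprMn expr2 -!mulrA -mulrBr ler_wpM2l ?u_dec.
- by rewrite mulrAC.
Qed.

Lemma dotv_ge0 {R : realType} {d} (v : 'rV[R]_d) : 0 <= dotv v v.
Proof. by apply: sumr_ge0 => i _; rewrite -expr2 sqr_ge0. Qed.

Lemma norm2_sqr {R : realType} {d} (v : 'rV[R]_d) : norm2 v ^+ 2 = dotv v v.
Proof. by rewrite /norm2 sqr_sqrtr // dotv_ge0. Qed.

Lemma dotvZl {R : realType} {d} (u v : 'rV[R]_d) (a : R) :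
  dotv (a *: u) v = a * dotv u v.
Proof. by rewrite /dotv mulr_sumr; apply: eq_bigr => i _; rewrite mxE mulrA. Qed.

Lemma dotvZr {R : realType} {d} (u v : 'rV[R]_d) (a : R) :
  dotv u (a *: v) = a * dotv u v.
Proof.
by rewrite /dotv mulr_sumr; apply: eq_bigr => i _; rewrite mxE mulrCA.
Qed.

Section GradientStep.
Context {R : realType} {d : nat} (f : 'rV[R]_d -> R) (g : 'rV[R]_d -> 'rV[R]_d).

Lemma L_smooth_ascent (L η : R) θ : L_smooth f g L ->
  f θ + η * (1 - L * η / 2) * norm2 (g θ) ^+ 2 <= f (θ + η *: g θ).
Proof.
move=> /(_ (θ + η *: g θ) θ); rewrite [θ + _ - θ]addrC addKr.
rewrite norm2_sqr dotvZr dotvZl dotvZr -norm2_sqr => /ler_normlP[+ _].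
lra.
Qed.

Lemma armijo_small_step (L h η : R) θ : L_smooth f g L ->
  0 <= η -> L * η <= 2 * (1 - h) -> armijo f g h θ η.
Proof.
move=> /(L_smooth_ascent _ η θ); rewrite /armijo => ascent η_ge0 Lη.
have : 0 <= η * norm2 (g θ) ^+ 2 * (2 * (1 - h) - L * η).
  by rewrite mulr_ge0 ?subr_ge0 // mulr_ge0 // sqr_ge0.
nra.
Qed.

Lemma armijo_gap_decrease (h η e m fstar : R) θ :
  0 <= h -> 0 <= e -> e <= η ->
  m * (fstar - f θ) ^+ 2 <= norm2 (g θ) ^+ 2 -> armijo f g h θ η ->
  fstar - f (θ + η *: g θ) <= fstar - f θ - h * e * m * (fstar - f θ) ^+ 2.
Proof.
rewrite /armijo => h_ge0 e_ge0 eη grad_bound armijo_η.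
have : h * e * (m * (fstar - f θ) ^+ 2) <= h * η * norm2 (g θ) ^+ 2.
  apply: (le_trans (_ : _ <= h * e * norm2 (g θ) ^+ 2)).
    by rewrite ler_wpM2l // mulr_ge0.
  by rewrite ler_wpM2r ?sqr_ge0 // ler_wpM2l.
lra.
Qed.

End GradientStep.

Lemma lojasiewicz_sqr_bound {R : realDomainType} (c m x y : R) :
  0 <= c -> c * `|x| <= y -> m <= c ^+ 2 -> m * x ^+ 2 <= y ^+ 2.
Proof.
move=> c_ge0 cxy mc.
have cx_ge0 : 0 <= c * `|x| by rewrite mulr_ge0.
apply: (le_trans (_ : _ <= (c * `|x|) ^+ 2)).
  by rewrite exprMn real_normK ?num_real // ler_wpM2r ?sqr_ge0.
by rewrite ler_sqr ?nnegrE // (le_trans cx_ge0 cxy).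
Qed.

Lemma backtracking_step_bounds {R : realFieldType} {L h eta_max M : R} :
  0 < h -> h < 1 -> 0 < eta_max ->
  L / (2 * h * (1 - h)) <= M -> 1 / (h * eta_max) <= M ->
  [/\ 0 < M, (h * M)^-1 <= eta_max & L * (h * M)^-1 <= 2 * (1 - h)].
Proof.
move=> h_gt0 h_lt1 eta_gt0 LM etaM.
have M_gt0 : 0 < M by apply: lt_le_trans etaM; rewrite divr_gt0 ?mulr_gt0.
have hM_gt0 : 0 < h * M by rewrite mulr_gt0.
split => //.
  by move: etaM; rewrite mul1r invfM ler_pdivrMl // invf_ple ?posrE.
move: LM; rewrite !ler_pdivrMr ?mulr_gt0 ?subr_gt0 //; lra.
Qed.

Theorem theorem1 (R : realType) (d : nat)
  (f : 'rV[R]_d -> R) (g : 'rV[R]_d -> 'rV[R]_d) (fstar L : R)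
  (C : 'rV[R]_d -> R) (h eta_max mu : R)
  (theta : nat -> 'rV[R]_d) (eta : nat -> R) :
  is_gradient f g ->
  is_sup_of f fstar ->
  L_smooth f g L ->
  (forall θ, 0 < C θ) ->
  (forall θ, norm2 (g θ) >= C θ * `|fstar - f θ|) ->
  0 < h -> h < 1 -> 0 < eta_max ->
  (forall t, (1 <= t)%N ->
     [/\ 0 < eta t, eta t <= eta_max, armijo f g h (theta t) (eta t)
       & forall η, 0 < η -> η <= eta_max -> armijo f g h (theta t) η -> η <= eta t]) ->
  (forall t, (1 <= t)%N -> theta t.+1 = theta t + eta t *: g (theta t)) ->
  (forall t, (1 <= t)%N -> mu <= C (theta t) ^+ 2) ->
  (forall e, 0 < e -> exists2 t, (1 <= t)%N & C (theta t) ^+ 2 < mu + e) ->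
  0 < mu ->
  forall T : nat, (1 <= T)%N ->
    fstar - f (theta T.+1)
      <= Num.max (L / (2 * h * (1 - h))) (1 / (h * eta_max)) * (1 / (mu * T%:R)).
Proof.
move=> _ [f_le_fstar _] smooth C_gt0 lojasiewicz h_gt0 h_lt1 eta_max_gt0
  backtracking step mu_le _ mu_gt0 T T_ge1.
set M := Num.max _ _.
have M_ge_smooth : L / (2 * h * (1 - h)) <= M by rewrite le_max lexx.
have M_ge_eta_max : 1 / (h * eta_max) <= M by rewrite le_max lexx orbT.
have [M_gt0 e_le_eta_max Le_small] :=
  backtracking_step_bounds h_gt0 h_lt1 eta_max_gt0 M_ge_smooth M_ge_eta_max.
pose delta t := fstar - f (theta t).
have decrease t : (1 <= t)%N -> delta t.+1 <= delta t - mu / M * delta t ^+ 2.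
  move=> t_ge1; have [_ _ armijo_t maximal] := backtracking t t_ge1.
  have e_le_eta : (h * M)^-1 <= eta t.
    apply: maximal => //; first by rewrite invr_gt0 mulr_gt0.
    by apply: armijo_small_step smooth _ Le_small; rewrite invr_ge0 ltW // mulr_gt0.
  have -> : mu / M = h * (h * M)^-1 * mu by field; rewrite !gt_eqF.
  rewrite /delta /= step //; apply: armijo_gap_decrease e_le_eta _ armijo_t.
  - exact: ltW.
  - by rewrite invr_ge0 ltW // mulr_gt0.
  - exact: lojasiewicz_sqr_bound (ltW (C_gt0 _)) (lojasiewicz _) (mu_le t t_ge1).
have delta_ge0 t : 0 <= delta t by rewrite subr_ge0.
have rate := quadratic_decrease_rate (ltW (divr_gt0 mu_gt0 M_gt0)) delta_ge0 decrease T.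
have T_gt0 : 0 < T%:R :> R by rewrite ltr0n.
have c_gt0 : 0 < mu / M * T%:R by rewrite !mulr_gt0 ?invr_gt0.
rewrite -(ler_pM2l c_gt0) (_ : _ * (M * _) = 1) //.
by field; rewrite !gt_eqF.
Qed.
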